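(* Let $\rho\in(0,1)$ and $k\ge1$ an integer, and let $\tilde\varepsilon=\rho\,\frac{1+\cos(\frac{2k-1}{2k}\pi)}{1-\cos(\frac{2k-1}{2k}\pi)}$. For every $\varepsilon\in[0,\tilde\varepsilon]$, $$\|p_\varepsilon\|_1=\frac{\tilde\rho_\varepsilon}{2}\Big(\frac{1}{\rho+\varepsilon}\Big)^k\Big(\big(2+\rho-\varepsilon-2\sqrt{(1+\rho)(1-\varepsilon)}\big)^k+\big(2+\rho-\varepsilon+2\sqrt{(1+\rho)(1-\varepsilon)}\big)^k\Big),$$ where $\tilde\rho_\varepsilon=\frac{2\beta_\varepsilon^k}{1+\beta_\varepsilon^{2k}}$ and $\beta_\varepsilon=\frac{1-\sqrt{1-\frac{\rho+\varepsilon}{1+\varepsilon}}}{1+\sqrt{1-\frac{\rho+\varepsilon}{1+\varepsilon}}}$.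
   Context: $\mathbb{R}_k[X]$ denotes real polynomials of degree at most $k$, and $\|p\|_1$ is the sum of absolute values of the coefficients of $p$. $p_\varepsilon$ denotes the minimizer of $\max_{x\in[-\varepsilon,\rho]}|p(x)|$ over $p\in\mathbb{R}_k[X]$ with $p(1)=1$; explicitly $p_\varepsilon(X)=T_k\big(2\frac{X+\varepsilon}{\rho+\varepsilon}-1\big)/\big|T_k\big(2\frac{1+\varepsilon}{\rho+\varepsilon}-1\big)\big|$, with $T_k$ the Chebyshev polynomial of the first kind of degree $k$. *)

From HB Require Import structures.
From mathcomp Require Import all_boot all_order all_algebra.
From mathcomp Require Import all_classical all_reals all_analysis.
Set Implicit Arguments. Unset Strict Implicit. Unset Printing Implicit Defensive.
Import Order.TTheory GRing.Theory Num.Theory.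
Local Open Scope ring_scope.

(* Chebyshev polynomials of the first kind: T_0 = 1, T_1 = X,
   T_{n+2} = 2 X T_{n+1} - T_n.  chebT_pair n = (T_n, T_{n+1}). *)
Fixpoint chebT_pair (R : ringType) (n : nat) : {poly R} * {poly R} :=
  match n with
  | 0%N => (1, 'X)
  | n'.+1 => let: (a, b) := chebT_pair R n' in (b, 2%:R *: 'X * b - a)
  end.

Definition chebT (R : ringType) (n : nat) : {poly R} := (chebT_pair R n).1.

Definition norm1 (R : numDomainType) (p : {poly R}) : R :=
  \sum_(i < size p) `|p`_i|.

Definition p_eps (R : realFieldType) (k : nat) (rho eps : R) : {poly R} :=
  (`|(chebT R k).[2 * (1 + eps) / (rho + eps) - 1]|)^-1 *:
    ((chebT R k) \Po ((2 / (rho + eps)) *: 'X + (2 * eps / (rho + eps) - 1)%:P)).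

(* The affine change of variable x |-> 2 (x + eps) / (rho + eps) - 1 sends the roots of
   p_eps onto the roots cos ((2i+1) pi / 2k) of T_k, and eps <= eps~ says exactly that it
   sends 0 to the left of the smallest of them, cos ((2k-1) pi / 2k).  So all roots of
   p_eps are nonnegative, the coefficients of p_eps alternate in sign, and
   ||p_eps||_1 = |p_eps(-1)|.  Both p_eps(-1) and the normalising value p_eps(1) are
   values of T_k at Joukowski points (u + u^-1) / 2, where T_k takes the value
   (u^k + u^-k) / 2: at x = 1 with u = beta_eps, and at x = -1 with
   u = -(2 + rho - eps - 2 sqrt ((1 + rho) (1 - eps))) / (rho + eps). *)

From HB Require Import structures.
From mathcomp Require Import all_boot all_order all_algebra.
From mathcomp Require Import all_classical all_reals all_analysis.
From mathcomp Require Import ring lra zify.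
Import Order.TTheory GRing.Theory Num.Theory.
Local Open Scope ring_scope.

Section Norm1.
Variable R : numDomainType.
Implicit Types p : {poly R}.

Lemma norm1E_wide {p n} : (size p <= n)%N -> norm1 p = \sum_(i < n) `|p`_i|.
Proof.
move=> le_p_n; rewrite /norm1 (big_ord_widen n (fun i => `|p`_i|) le_p_n).
rewrite big_mkcond /=; apply: eq_bigr => i _.
by case: ltnP => // /(nth_default 0) ->; rewrite normr0.
Qed.

Lemma norm1Z c p : norm1 (c *: p) = `|c| * norm1 p.
Proof.
rewrite (norm1E_wide (size_scale_leq c p)) /norm1 mulr_sumr.
by apply: eq_bigr => i _; rewrite coefZ normrM.
Qed.

Lemma norm1_coef_ge0 p : (forall i, 0 <= p`_i) -> norm1 p = p.[1].
Proof.
move=> p_ge0; rewrite horner_coef; apply: eq_bigr => i _.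
by rewrite expr1n mulr1 ger0_norm.
Qed.

Lemma comp_polyNX p : p \Po (- 'X) = \poly_(i < size p) ((-1) ^+ i * p`_i).
Proof.
rewrite comp_polyE poly_def; apply: eq_bigr => i _.
by rewrite -scaleN1r exprZn scalerA mulrC.
Qed.

Lemma norm1_comp_polyNX p : norm1 (p \Po (- 'X)) = norm1 p.
Proof.
rewrite comp_polyNX (norm1E_wide (size_poly _ _)); apply: eq_bigr => i _.
by rewrite coef_poly ltn_ord normrM normrX normrN1 expr1n mul1r.
Qed.

Section NonnegRoots.
Variables (I : eqType) (r : seq I) (F : I -> R).

Lemma coef_prod_XaddC_ge0 : {in r, forall i, 0 <= F i} ->
  forall n, 0 <= (\prod_(i <- r) ('X + (F i)%:P))`_n.
Proof.
elim: r => [_ n|i r' IHr F_ge0 n]; first by rewrite big_nil coef1; case: (n == 0)%N.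
have Fi_ge0 : 0 <= F i by apply: F_ge0; rewrite mem_head.
have {}IHr : forall n, 0 <= (\prod_(j <- r') ('X + (F j)%:P))`_n.
  by apply: IHr => j jr; apply: F_ge0; rewrite in_cons jr orbT.
rewrite big_cons mulrDl coefD coefXM coefCM.
by rewrite addr_ge0 ?mulr_ge0 //; case: (n == 0)%N.
Qed.

Lemma prod_XsubC_comp_polyNX :
  \prod_(i <- r) ('X - (F i)%:P) \Po (- 'X) =
    (-1) ^+ size r *: \prod_(i <- r) ('X + (F i)%:P).
Proof.
rewrite rmorph_prod -[(-1) ^+ _]iter_mulr_1 -count_predT -big_const_seq -scaler_prod.
by apply: eq_bigr => i _; rewrite /= comp_polyB comp_polyX comp_polyC scaleN1r opprD.
Qed.

Lemma norm1_prod_XsubC c : {in r, forall i, 0 <= F i} ->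
  let p := c *: \prod_(i <- r) ('X - (F i)%:P) in norm1 p = `|p.[-1]|.
Proof.
move=> F_ge0 p; have coef_ge0 := coef_prod_XaddC_ge0 F_ge0.
have P1_ge0 : 0 <= (\prod_(i <- r) ('X + (F i)%:P)).[1].
  by rewrite -norm1_coef_ge0 // sumr_ge0.
have -> : p.[-1] = (p \Po (- 'X)).[1] by rewrite horner_comp hornerN hornerX.
rewrite -norm1_comp_polyNX comp_polyZ prod_XsubC_comp_polyNX scalerA.
by rewrite norm1Z norm1_coef_ge0 // hornerZ !normrM (ger0_norm P1_ge0).
Qed.

End NonnegRoots.

End Norm1.

Section RootFactorization.
Variable F : fieldType.
Implicit Types (p : {poly F}) (s : seq F).

Lemma prod_XsubC_of_roots p s : (size p <= (size s).+1)%N ->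
  all (root p) s -> uniq s -> exists c, p = c *: \prod_(z <- s) ('X - z%:P).
Proof.
move=> size_p p_roots s_uniq.
have [q def_p] := uniq_roots_prod_XsubC p_roots (etrans (uniq_rootsE s) s_uniq).
exists q`_0; rewrite def_p -mul_polyC -size1_polyC //.
have [-> //|q_neq0] := eqVneq q 0; first by rewrite size_poly0.
move: size_p; rewrite def_p size_Mmonic ?monic_prod_XsubC // size_prod_XsubC.
by rewrite addnS /= -addn1 addnC leq_add2l.
Qed.

Lemma comp_prod_XsubC_affine c s a b : a != 0 ->
  (c *: \prod_(z <- s) ('X - z%:P)) \Po (a *: 'X + b%:P) =
    (c * a ^+ size s) *: \prod_(z <- s) ('X - ((z - b) / a)%:P).
Proof.
move=> a_neq0; rewrite comp_polyZ rmorph_prod -scalerA.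
rewrite -[a ^+ _]iter_mulr_1 -count_predT -big_const_seq -scaler_prod.
congr (_ *: _); apply: eq_bigr => z _.
rewrite /= comp_polyB comp_polyX comp_polyC scalerBr scale_polyC mulrC divfK //.
by rewrite polyCB opprB addrA.
Qed.

End RootFactorization.

Definition joukowski {F : fieldType} (u : F) : F := (u + u^-1) / 2.

Lemma joukowskiN (F : fieldType) (u : F) : joukowski (- u) = - joukowski u.
Proof. by rewrite /joukowski invrN -opprD mulNr. Qed.

Lemma normr_joukowski (R : realFieldType) (u : R) : `|joukowski u| = joukowski `|u|.
Proof.
rewrite /joukowski normrM normfV [`|2|]ger0_norm // -normfV.
have [/ltW u_le0|u_ge0] := ltP u 0.
  have uV_le0 : u^-1 <= 0 by rewrite invr_le0.
  have sum_le0 : u + u^-1 <= 0 by lra.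
  by rewrite !ler0_norm ?opprD.
have uV_ge0 : 0 <= u^-1 by rewrite invr_ge0.
have sum_ge0 := addr_ge0 u_ge0 uV_ge0.
by rewrite !ger0_norm.
Qed.

Lemma chebTSS (R : nzRingType) n :
  chebT R n.+2 = 2%:R *: 'X * chebT R n.+1 - chebT R n.
Proof. by rewrite /chebT /=; case: (chebT_pair R n). Qed.

Lemma size_chebT (R : nzRingType) n : (size (chebT R n) <= n.+1)%N.
Proof.
elim/ltn_ind: n => -[|[|n]] IH; first by rewrite size_poly1.
  by rewrite size_polyX.
have size_T0 : (size (chebT R n) <= n.+3)%N by apply: leq_trans (IH n _) _; lia.
have size_T1 := IH n.+1 (ltnSn _).
have size_2X : (size (2%:R *: 'X : {poly R}) <= 2)%N.
  by rewrite (leq_trans (size_scale_leq _ _)) // size_polyX.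
rewrite chebTSS (leq_trans (size_polyD _ _)) // geq_max size_polyN size_T0 andbT.
rewrite (leq_trans (size_polyMleq _ _)) // -subn1 leq_subLR add1n.
exact: leq_add size_2X size_T1.
Qed.

Lemma horner_chebT_joukowski (R : numFieldType) n (u : R) : u != 0 ->
  (chebT R n).[joukowski u] = joukowski (u ^+ n).
Proof.
rewrite /joukowski => u_neq0; elim/ltn_ind: n => -[|[|n]] IH.
- by rewrite hornerC expr0 invr1; field.
- by rewrite hornerX.
rewrite chebTSS hornerD hornerN hornerM hornerZ hornerX !IH //.
by rewrite !exprS !invfM; field; rewrite expf_neq0.
Qed.

Lemma horner_chebT_cos (R : realType) n (t : R) :
  (chebT R n).[cos t] = cos (n%:R * t).
Proof.
elim/ltn_ind: n => -[|[|n]] IH; first by rewrite hornerC mul0r cos0.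
  by rewrite hornerX mul1r.
rewrite chebTSS hornerD hornerN hornerM hornerZ hornerX !IH //.
have -> : n.+2%:R * t = n.+1%:R * t + t by rewrite [in LHS]mulrS; ring.
have -> : n%:R * t = n.+1%:R * t - t by rewrite mulrS; ring.
by rewrite !cosD cosN sinN; ring.
Qed.

Lemma ler_cos (R : realType) : {in `[0, pi] &, {mono @cos R : x y /~ x <= y}}.
Proof. by apply: le_nmono_in => x y x_in y_in; rewrite ltr_cos. Qed.

Section ChebyshevRoots.
Variables (R : realType) (k : nat).

Definition chebT_root_angle (i : nat) : R := (2 * i%:R + 1) / (2 * k%:R) * pi.
Definition chebT_root (i : nat) : R := cos (chebT_root_angle i).

Lemma chebT_root_angle_le i j : (i <= j)%N -> chebT_root_angle i <= chebT_root_angle j.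
Proof.
move=> le_ij; apply: ler_wpM2r; first exact: pi_ge0.
by apply: ler_wpM2r; rewrite ?invr_ge0 ?mulr_ge0 // lerD2r ler_pM2l // ler_nat.
Qed.

Lemma chebT_root_angle_in {i} : (i < k)%N -> chebT_root_angle i \in `[0, pi].
Proof.
move=> lt_ik; have k_gt0 : 0 < k%:R :> R by rewrite ltr0n (leq_ltn_trans _ lt_ik).
rewrite in_itv /= mulr_ge0 ?pi_ge0 ?divr_ge0 ?addr_ge0 ?mulr_ge0 //=.
rewrite ler_piMl ?pi_ge0 // ler_pdivrMr ?mulr_gt0 // mul1r.
have : i.+1%:R <= k%:R :> R by rewrite ler_nat.
by rewrite -natr1; lra.
Qed.

Hypothesis k_gt0 : (0 < k)%N.

Lemma root_chebT_root i : root (chebT R k) (chebT_root i).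
Proof.
have k_neq0 : k%:R != 0 :> R by rewrite pnatr_eq0 -lt0n.
apply/eqP; rewrite horner_chebT_cos.
have -> : k%:R * chebT_root_angle i = i%:R * pi + pi / 2.
  by rewrite /chebT_root_angle; field.
elim: i => [|i IHi]; first by rewrite mul0r add0r cos_pihalf.
by rewrite -natr1 mulrDl mul1r addrAC cosDpi IHi oppr0.
Qed.

Lemma chebT_root_angle_inj : injective chebT_root_angle.
Proof.
have two_neq0 : 2 != 0 :> R by rewrite pnatr_eq0.
have two_k_neq0 : 2 * k%:R != 0 :> R by rewrite mulf_neq0 // pnatr_eq0 -lt0n.
move=> i j /(mulIf (lt0r_neq0 (pi_gt0 R))) /(mulIf (invr_neq0 two_k_neq0)).
by move/addIr/(mulfI two_neq0)/eqP; rewrite eqr_nat => /eqP.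
Qed.

Lemma uniq_chebT_roots : uniq (mkseq chebT_root k).
Proof.
rewrite map_inj_in_uniq ?iota_uniq // => i j; rewrite !mem_iota !add0n => lt_ik lt_jk.
by move/(cos_inj (chebT_root_angle_in lt_ik) (chebT_root_angle_in lt_jk))/chebT_root_angle_inj.
Qed.

Lemma chebT_root_last_le i : (i < k)%N -> chebT_root k.-1 <= chebT_root i.
Proof.
move=> lt_ik; have lt_k1k : (k.-1 < k)%N by rewrite ltn_predL.
rewrite ler_cos ?chebT_root_angle_in // chebT_root_angle_le //.
by rewrite -ltnS prednK.
Qed.

Lemma chebT_root_angle_last :
  chebT_root_angle k.-1 = (2 * k%:R - 1) / (2 * k%:R) * pi.
Proof.
have kE : k%:R = k.-1%:R + 1 :> R by rewrite natr1 prednK.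
by rewrite /chebT_root_angle kE; congr (_ / _ * _); ring.
Qed.

Lemma chebT_root_last : chebT_root k.-1 = cos ((2 * k%:R - 1) / (2 * k%:R) * pi).
Proof. by rewrite /chebT_root chebT_root_angle_last. Qed.

Lemma chebT_root_last_le0 : chebT_root k.-1 <= 0.
Proof.
have pihalf_in : pi / 2 \in `[0, pi :> R].
  by rewrite in_itv /= divr_ge0 ?pi_ge0 // ler_pdivrMr // ler_peMr ?pi_ge0 ?ler1n.
rewrite -cos_pihalf ler_cos ?chebT_root_angle_in ?ltn_predL // chebT_root_angle_last.
have k_ge1 : 1 <= k%:R :> R by rewrite ler1n.
have : 1 / 2 <= (2 * k%:R - 1) / (2 * k%:R) :> R.
  by rewrite ler_pdivlMr ?mulr_gt0 ?ltr0n //; lra.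
by have := pi_gt0 R; nra.
Qed.

Lemma chebT_prod_XsubC :
  exists c, chebT R k = c *: \prod_(z <- mkseq chebT_root k) ('X - z%:P).
Proof.
apply: prod_XsubC_of_roots; first by rewrite size_mkseq size_chebT.
  by apply/allP => _ /mapP[i _ ->]; apply: root_chebT_root.
exact: uniq_chebT_roots.
Qed.

End ChebyshevRoots.

Lemma norm1_p_eps (R : realType) k (rho eps : R) : (0 < k)%N -> 0 < rho + eps ->
  2 * eps / (rho + eps) - 1 <= chebT_root R k k.-1 ->
  norm1 (p_eps k rho eps) = `|(p_eps k rho eps).[-1]|.
Proof.
move=> k_gt0 re_gt0 origin_le_root; have a_gt0 : 0 < 2 / (rho + eps) by rewrite divr_gt0.
rewrite /p_eps; have [c ->] := chebT_prod_XsubC R k k_gt0.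
rewrite comp_prod_XsubC_affine ?lt0r_neq0 // scalerA.
apply: norm1_prod_XsubC => z /mapP[i]; rewrite mem_iota add0n => /andP[_ lt_ik] ->.
rewrite divr_ge0 ?(ltW a_gt0) // subr_ge0 (le_trans origin_le_root) //.
exact: chebT_root_last_le.
Qed.

Lemma le_eps_tilde {R : realFieldType} {rho eps C : R} :
  0 < rho -> 0 <= eps -> C <= 0 -> eps <= rho * (1 + C) / (1 - C) ->
  eps <= rho /\ 2 * eps / (rho + eps) - 1 <= C.
Proof.
move=> rho_gt0 eps_ge0 C_le0; rewrite ler_pdivlMr; last lra.
move=> eps_le; have eps_le_rho : eps <= rho by nra.
by split=> //; rewrite lerBlDr ler_pdivrMr; nra.
Qed.

Lemma joukowski_cayley (R : realFieldType) (s : R) : 0 <= s -> s < 1 ->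
  joukowski ((1 - s) / (1 + s)) = (1 + s ^+ 2) / (1 - s ^+ 2).
Proof.
move=> s_ge0 s_lt1; have s1_gt0 : 0 < 1 - s by lra.
have s2_gt0 : 0 < 1 - s ^+ 2 by nra.
by rewrite /joukowski invf_div; field; rewrite !lt0r_neq0 //; lra.
Qed.

Lemma invf_div_conj (F : fieldType) (x y z : F) : z != 0 -> x - y != 0 ->
  x ^+ 2 - y ^+ 2 = z ^+ 2 -> ((x - y) / z)^-1 = (x + y) / z.
Proof.
move=> z_neq0 xy_neq0 xyz; apply/eqP; rewrite invf_div eqr_div //.
by rewrite -expr2 -xyz; apply/eqP; ring.
Qed.

Lemma p_eps_arg1_joukowski {R : realFieldType} {rho eps s : R} :
  0 < rho + eps -> 0 <= eps -> 0 <= s -> s ^+ 2 = 1 - (rho + eps) / (1 + eps) ->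
  let beta := (1 - s) / (1 + s) in
  0 < beta /\ joukowski beta = 2 * (1 + eps) / (rho + eps) - 1.
Proof.
move=> re_gt0 eps_ge0 s_ge0 s2 beta.
have q_gt0 : 0 < (rho + eps) / (1 + eps) by rewrite divr_gt0 //; lra.
have s_lt1 : s < 1 by nra.
split; first by rewrite divr_gt0; lra.
rewrite joukowski_cayley // s2; field.
by apply/andP; split; apply: lt0r_neq0; lra.
Qed.

Lemma p_eps_argN1_joukowski {R : realFieldType} {rho eps r : R} :
  0 < rho + eps -> eps <= rho -> 0 <= r -> r ^+ 2 = (1 + rho) * (1 - eps) ->
  let g := (2 + rho - eps - 2 * r) / (rho + eps) in
  [/\ 0 < g, g^-1 = (2 + rho - eps + 2 * r) / (rho + eps)
    & joukowski (- g) = 2 / (rho + eps) * -1 + (2 * eps / (rho + eps) - 1)].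
Proof.
move=> re_gt0 eps_le_rho r_ge0 r2 g; set D := 2 + rho - eps in g *.
have D2r : D ^+ 2 - (2 * r) ^+ 2 = (rho + eps) ^+ 2 by rewrite exprMn r2 /D; ring.
have Dr_gt0 : 0 < D - 2 * r by rewrite /D; nra.
have gV : g^-1 = (D + 2 * r) / (rho + eps).
  by apply: invf_div_conj; rewrite ?lt0r_neq0.
split=> //; first by rewrite divr_gt0.
by rewrite joukowskiN /joukowski gV /g /D; field; rewrite lt0r_neq0.
Qed.

Theorem lemma3 (R : realType) (rho : R) (k : nat) (eps : R) :
  0 < rho -> rho < 1 -> (1 <= k)%N ->
  0 <= eps ->
  eps <= rho * (1 + cos ((2 * k%:R - 1) / (2 * k%:R) * pi))
              / (1 - cos ((2 * k%:R - 1) / (2 * k%:R) * pi)) ->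
  let s := Num.sqrt (1 - (rho + eps) / (1 + eps)) in
  let beta := (1 - s) / (1 + s) in
  let rho_t := 2 * beta ^+ k / (1 + beta ^+ (2 * k)) in
  let r := Num.sqrt ((1 + rho) * (1 - eps)) in
  norm1 (p_eps k rho eps) =
    rho_t / 2 * (1 / (rho + eps)) ^+ k *
      ((2 + rho - eps - 2 * r) ^+ k + (2 + rho - eps + 2 * r) ^+ k).
Proof.
move=> rho_gt0 rho_lt1 k_gt0 eps_ge0 eps_le s beta rho_t r.
rewrite -chebT_root_last // in eps_le.
have [eps_le_rho origin_le_root] :=
  le_eps_tilde rho_gt0 eps_ge0 (chebT_root_last_le0 R k k_gt0) eps_le.
have re_gt0 : 0 < rho + eps by lra.
have s2 : s ^+ 2 = 1 - (rho + eps) / (1 + eps).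
  by rewrite sqr_sqrtr // subr_ge0 ler_pdivrMr; lra.
have r2 : r ^+ 2 = (1 + rho) * (1 - eps) by rewrite sqr_sqrtr // mulr_ge0 //; lra.
have [beta_gt0 arg1E] := p_eps_arg1_joukowski re_gt0 eps_ge0 (sqrtr_ge0 _) s2.
have [g_gt0 gV argN1E] := p_eps_argN1_joukowski re_gt0 eps_le_rho (sqrtr_ge0 _) r2.
rewrite -/s -/beta in beta_gt0 arg1E; rewrite -/r in g_gt0 gV argN1E.
set g := (2 + rho - eps - 2 * r) / (rho + eps) in g_gt0 gV argN1E.
rewrite norm1_p_eps // /p_eps hornerZ horner_comp hornerD hornerZ hornerX hornerC.
rewrite -arg1E -argN1E !horner_chebT_joukowski ?oppr_eq0 ?lt0r_neq0 //.
rewrite normrM normfV normr_id !normr_joukowski !normrX normrN !gtr0_norm //.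
rewrite /rho_t mulnC exprM; move: (exprn_gt0 k beta_gt0); set u := beta ^+ k => u_gt0.
rewrite /joukowski -(exprVn g) gV !expr_div_n expr1n.
field; apply/and3P; split; apply: lt0r_neq0; rewrite ?exprn_gt0 //.
by rewrite ltr_pwDl // sqr_ge0.
Qed.
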